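(* There is an absolute constant $c>0$ such that the following holds. Let $G$ be a finite graph with $n\ge 2$ vertices and let $k=\mathrm{mw}_1(G)$. Then $G$ contains disjoint vertex subsets $A,B$ with $|A|\ge c\,n/k^2$ and $|B|\ge c\,n/k^2$ such that $A,B$ are either complete (every $a\in A$ is adjacent to every $b\in B$) or anti-complete (no $a\in A$ is adjacent to any $b\in B$).
   Context: All graphs are finite, simple and undirected. A merge sequence for a graph $G=(V,E)$ is a sequence $(\mathcal{P}_1,R_1),\dots,(\mathcal{P}_m,R_m)$ where: (1) each $\mathcal{P}_i$ is a partition of $V$, $\mathcal{P}_1$ is the partition into singletons, $\mathcal{P}_m=\{V\}$, and each $\mathcal{P}_i$ is coarser than or equal to $\mathcal{P}_{i-1}$ (each part of $\mathcal{P}_i$ is a union of parts of $\mathcal{P}_{i-1}$); (2) $R_1\subseteq R_2\subseteq\dots\subseteq R_m\subseteq\binom{V}{2}$ are sets of unordered pairs of distinct vertices, called resolved pairs; (3) for any two (possibly equal) parts $A,B\in\mathcal{P}_i$, the pairs $\{a,b\}$ with $a\in A$, $b\in B$, $a\ne b$, which are not in $R_i$ (the unresolved pairs between $A$ and $B$) are either all edges of $G$ or all non-edges of $G$. For $r\in\mathbb{N}$, the radius-$r$ width of the merge sequence is the maximum, over all steps $i\ge 2$ and all vertices $v\in V$, of the number of parts of $\mathcal{P}_{i-1}$ that contain a vertex at distance at most $r$ from $v$ in the graph $(V,R_i)$. The radius-$r$ merge-width $\mathrm{mw}_r(G)$ is the minimum radius-$r$ width of a merge sequence for $G$. *)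

From mathcomp Require Import all_boot all_order all_algebra.
Set Implicit Arguments. Unset Strict Implicit. Unset Printing Implicit Defensive.

Section MergeWidth.
Variable T : finType.

(* A partition of the vertex set is a {set {set T}}; resolved pairs are a
   set of 2-element subsets of T (unordered pairs of distinct vertices). *)
Definition part_t := {set {set T}}.
Definition pairs_t := {set {set T}}.

Definition singletons : part_t := [set [set x] | x : T].

Definition pairset (R : pairs_t) : Prop := forall p, p \in R -> #|p| = 2.

Definition coarser (P Q : part_t) : Prop :=
  forall A, A \in Q -> exists2 B, B \in P & A \subset B.

Definition homogeneous (e : rel T) (P : part_t) (R : pairs_t) : Prop :=
  forall A B, A \in P -> B \in P ->
    (forall a b, a \in A -> b \in B -> a != b -> [set a; b] \notin R -> e a b)
    \/ (forall a b, a \in A -> b \in B -> a != b -> [set a; b] \notin R -> ~~ e a b).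

Definition step := (part_t * pairs_t)%type.
Definition dstep : step := (set0, set0).

(* merge sequence (P_1,R_1),...,(P_m,R_m), stored 0-indexed *)
Definition merge_seq (e : rel T) (s : seq step) : Prop :=
  [/\ 0 < size s,
      (nth dstep s 0).1 = singletons,
      (nth dstep s (size s).-1).1 = [set [set: T]],
      (forall i, i < size s ->
         [/\ partition (nth dstep s i).1 [set: T],
             pairset (nth dstep s i).2 &
             homogeneous e (nth dstep s i).1 (nth dstep s i).2]) &
      (forall i, i.+1 < size s ->
         coarser (nth dstep s i.+1).1 (nth dstep s i).1 /\
         (nth dstep s i).2 \subset (nth dstep s i.+1).2)].

Fixpoint ball (R : pairs_t) (r : nat) (v : T) : {set T} :=
  match r with
  | 0 => [set v]
  | r'.+1 => let B := ball R r' v in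
             B :|: [set u | [exists w in B, [set w; u] \in R]]
  end.

Definition nparts (P : part_t) (R : pairs_t) (r : nat) (v : T) : nat :=
  #|[set A in P | A :&: ball R r v != set0]|.

(* radius-r width: max over steps i >= 2 (0-indexed: i+1 >= 1) and v
   of the number of parts of P_{i-1} meeting the r-ball of v in (V,R_i) *)
Definition width (r : nat) (s : seq step) : nat :=
  \max_(i < (size s).-1) \max_(v : T)
     nparts (nth dstep s i).1 (nth dstep s i.+1).2 r v.

Definition is_mw (e : rel T) (r k : nat) : Prop :=
  (exists2 s, merge_seq e s & width r s = k) /\
  (forall s, merge_seq e s -> k <= width r s).

End MergeWidth.

From mathcomp Require Import all_boot all_order all_algebra zify ring.
Import GRing.Theory Num.Theory.
Set Implicit Arguments. Unset Strict Implicit. Unset Printing Implicit Defensive.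

(* Take the first step of an optimal merge sequence at which some part X reaches
   L ~ n/8k vertices, so that all parts Z of the previous partition are smaller
   than L.  Each vertex of X meets at most k of these parts within distance 1
   in the resolved graph, so by Markov's inequality all but 4kL vertices lie in
   light parts Z, met by at most |X||Z|/4L vertices of X.  Homogeneity makes the
   unresolved pairs between X and Z all edges or all non-edges; collecting light
   parts of the majority type gives a set B of size between L and 2L that is met
   by at most half of X.  The vertices of X meeting nothing of B form A, and all
   pairs of A x B are unresolved, hence of that common type.  This even gives
   |A|, |B| >= n/32k. *)

Section Counting.
Variables (I : finType) (w : I -> nat).

Lemma exists_sub_sum_window (S : {set I}) (m L : nat) :
  (forall i, i \in S -> w i <= L) -> m <= \sum_(i in S) w i ->
  exists2 F : {set I}, F \subset S & m <= \sum_(i in F) w i <= m + L.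
Proof.
move=> wS mS.
pose P (F : {set I}) := (F \subset S) && (m <= \sum_(i in F) w i).
have PS : P S by rewrite /P subxx mS.
have [F /andP[FS mF] Fmin] := @arg_minnP _ S P (fun F => #|F|) PS.
exists F => //; rewrite mF /=.
have [->|[z zF]] := set_0Vmem F; first by rewrite big_set0.
rewrite (big_setD1 z zF) /=.
have wz := wS z (subsetP FS z zF).
suff : \sum_(i in F :\ z) w i < m by lia.
rewrite ltnNge; apply/negP => mFz.
have := Fmin (F :\ z); rewrite /P (subset_trans (subD1set F z) FS) mFz /= (cardsD1 z F) zF.
lia.
Qed.

Lemma exists_majority_bool (P : pred I) (f : I -> bool) :
  exists t, \sum_(i | P i) w i <= 2 * \sum_(i | P i && (f i == t)) w i.
Proof.
have split_f : \sum_(i | P i) w i =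
    \sum_(i | P i && (f i == true)) w i + \sum_(i | P i && (f i == false)) w i.
  rewrite (bigID f) /=; congr (_ + _); apply: eq_bigl => i; by case: (f i).
case: (leqP (\sum_(i | P i) w i) (2 * \sum_(i | P i && (f i == true)) w i)).
  by exists true.
by exists false; lia.
Qed.

Lemma sum_heavy_le (P : pred I) (s : I -> nat) (a b : nat) :
  \sum_(i | P i && (b * w i < a * s i)) w i * b <= a * \sum_(i | P i) s i.
Proof.
rewrite big_distrr /=.
apply: leq_trans (_ : \sum_(i | P i && (b * w i < a * s i)) a * s i <= _).
  by apply: leq_sum => i /andP[_ /ltnW]; rewrite mulnC.
by rewrite [X in _ <= X](bigID (fun i => b * w i < a * s i)) /= leq_addr.
Qed.

Lemma card_le_zeros_add_sum (A : {set I}) :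
  #|A| <= #|[set i in A | w i == 0]| + \sum_(i in A) w i.
Proof.
rewrite -sum1_card (bigID (fun i => w i == 0)) /=; apply: leq_add.
  by rewrite -sum1_card; apply/eq_leq/eq_bigl => i; rewrite inE.
apply: leq_trans (_ : \sum_(i in A | w i != 0) w i <= _).
  by apply: leq_sum => i /andP[_]; rewrite lt0n.
by rewrite [X in _ <= X](bigID (fun i => w i != 0)) /= leq_addr.
Qed.

End Counting.

Lemma divn_window n d : 0 < d -> 2 * d <= n ->
  [/\ 1 < n %/ d, n %/ d * d <= n & n <= 2 * (n %/ d) * d].
Proof.
move=> d_gt0 n2d; have q2 : 1 < n %/ d by rewrite leq_divRL // mulnC.
split; rewrite ?leq_divM //.
by have := ltn_ceil n d_gt0; nia.
Qed.

Section Balls.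
Variables (T : finType) (R : pairs_t T).

Lemma ball_self r v : v \in ball R r v.
Proof. by elim: r => [|r IH] /=; rewrite ?inE ?IH. Qed.

Lemma mem_ball1 v u : [set v; u] \in R -> u \in ball R 1 v.
Proof.
by move=> vu; rewrite /= !inE; apply/orP; right; apply/existsP; exists v; rewrite inE eqxx.
Qed.

Definition nhit (r : nat) (Y Z : {set T}) : nat :=
  #|[set y in Y | Z :&: ball R r y != set0]|.

Lemma sum_nhit r (F : {set {set T}}) (Y : {set T}) :
  \sum_(Z in F) nhit r Y Z = \sum_(y in Y) nparts F R r y.
Proof.
have card_sep (I : finType) (A : {set I}) (c : pred I) :
    #|[set x in A | c x]| = \sum_(x in A) c x.
  by rewrite -sum1dep_card big_mkcondr; apply: eq_bigr => x _; case: (c x).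
rewrite /nhit /nparts; under eq_bigr do rewrite card_sep.
by rewrite exchange_big; apply: eq_bigr => y _; rewrite card_sep.
Qed.

Lemma nparts_gt0 (P : {set {set T}}) r v : v \in cover P -> 0 < nparts P R r v.
Proof.
case/bigcupP => Z ZP vZ; rewrite card_gt0; apply/set0Pn; exists Z.
by rewrite inE ZP; apply/set0Pn; exists v; rewrite inE vZ ball_self.
Qed.

Lemma nparts1_eq0_unresolved (F : {set {set T}}) a b :
  nparts F R 1 a = 0 -> b \in cover F -> a != b /\ [set a; b] \notin R.
Proof.
move/eqP; rewrite cards_eq0 => /eqP F0 /bigcupP[Z ZF bZ].
have Zfar : Z :&: ball R 1 a = set0.
  by apply/eqP; apply: contraT => meet; have := in_set0 Z; rewrite -F0 inE ZF meet.
split; apply: contraT; rewrite negbK.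
  by move/eqP => ab; have := in_set0 a; rewrite -Zfar inE ab bZ -ab ball_self.
by move/mem_ball1 => ab; have := in_set0 b; rewrite -Zfar inE bZ ab.
Qed.

End Balls.

Definition pure_pair (T : finType) (e : rel T) (A B : {set T}) : Prop :=
  (forall a b, a \in A -> b \in B -> e a b) \/
  (forall a b, a \in A -> b \in B -> ~~ e a b).

Section OneMergeStep.
Variables (T : finType) (e : rel T) (P Q R : {set {set T}}) (k L : nat).
Hypothesis partP : partition P [set: T].
Hypothesis coarseQP : coarser Q P.
Hypothesis homQ : homogeneous e Q R.
Hypothesis nparts_le : forall v, nparts P R 1 v <= k.
Hypothesis small_parts : forall Z, Z \in P -> #|Z| <= L.

Lemma card_cover_sub (F : {set {set T}}) :
  F \subset P -> #|cover F| = \sum_(Z in F) #|Z|.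
Proof. by move=> FP; apply/esym/eqP/(trivIsetS FP (partition_trivIset partP)). Qed.

Lemma exists_cover_window (F0 : {set {set T}}) :
  F0 \subset P -> L <= \sum_(Z in F0) #|Z| ->
  exists2 F : {set {set T}}, F \subset F0 & L <= #|cover F| <= 2 * L.
Proof.
move=> F0P LF0.
have [F FF0 hF] := exists_sub_sum_window
  (fun Z ZF0 => small_parts (subsetP F0P Z ZF0)) LF0.
by exists F; rewrite // card_cover_sub ?(subset_trans FF0 F0P) // mul2n -addnn.
Qed.

Definition edge_type (X Z : {set T}) : bool :=
  [forall a in X, forall b in Z, (a != b) ==> ([set a; b] \notin R) ==> e a b].

Lemma edge_typeE X Z a b :
  X \in Q -> Z \in P -> a \in X -> b \in Z -> a != b -> [set a; b] \notin R ->
  e a b = edge_type X Z.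
Proof.
move=> XQ ZP aX bZ ab abR; have [W WQ ZW] := coarseQP ZP.
case: (homQ XQ WQ) => [edges|nonedges].
  rewrite edges ?(subsetP ZW) //; symmetry.
  apply/forallP => a'; apply/implyP => a'X; apply/forallP => b'; apply/implyP => b'Z.
  by apply/implyP => a'b'; apply/implyP; apply: edges; rewrite ?(subsetP ZW).
rewrite (negbTE (nonedges _ _ aX (subsetP ZW _ bZ) ab abR)); symmetry; apply/negbTE.
apply/forallPn; exists a; rewrite aX /=; apply/forallPn; exists b.
by rewrite bZ ab abR /= (negbTE (nonedges _ _ aX (subsetP ZW _ bZ) ab abR)).
Qed.

Variable X : {set T}.
Hypothesis XQ : X \in Q.
Hypothesis large_X : L <= #|X|.
Hypothesis L_gt0 : 0 < L.

Definition light (Z : {set T}) : bool := 4 * L * nhit R 1 X Z <= #|X| * #|Z|.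

Lemma sum_heavy_parts : \sum_(Z in P | ~~ light Z) #|Z| <= 4 * k * L.
Proof.
have X_gt0 : 0 < #|X| by apply: leq_trans large_X.
have hits : \sum_(Z in P) nhit R 1 X Z <= k * #|X|.
  by rewrite sum_nhit mulnC -sum_nat_const; apply: leq_sum.
have := sum_heavy_le (fun Z : {set T} => #|Z|) (mem P) (nhit R 1 X) (4 * L) #|X|.
rewrite -big_distrl /= => heavy.
rewrite -(leq_pmul2r X_gt0)
  (eq_bigl (fun Z => (Z \in P) && (#|X| * #|Z| < 4 * L * nhit R 1 X Z))).
  apply: leq_trans heavy _.
  have -> : 4 * k * L * #|X| = 4 * L * (k * #|X|) by ring.
  by rewrite leq_mul2l hits orbT.
by move=> Z; rewrite /light ltnNge.
Qed.

Lemma exists_light_window : (2 + 4 * k) * L <= #|T| ->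
  exists t, exists2 F : {set {set T}},
    F \subset [set Z in P | light Z && (edge_type X Z == t)] &
    L <= #|cover F| <= 2 * L.
Proof.
move=> n_large.
have sumP : #|T| = \sum_(Z in P | light Z) #|Z| + \sum_(Z in P | ~~ light Z) #|Z|.
  by rewrite -cardsT (card_partition partP) (bigID light).
have [t ht] := exists_majority_bool (fun Z : {set T} => #|Z|)
  (fun Z => (Z \in P) && light Z) (edge_type X).
exists t; apply: exists_cover_window.
  by apply/subsetP => Z; rewrite inE => /andP[].
rewrite (eq_bigl (fun Z => (Z \in P) && light Z && (edge_type X Z == t))) => [|Z];
  last by rewrite inE andbA.
set light_mass := \sum_(Z in P | light Z) #|Z| in sumP ht.
set typed_mass := \sum_(Z | _ && (edge_type X Z == t)) #|Z| in ht *.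
have := sum_heavy_parts; rewrite mulnDl in n_large; lia.
Qed.

Lemma light_few_hits (F : {set {set T}}) :
  F \subset P -> {in F, forall Z, light Z} -> #|cover F| <= 2 * L ->
  2 * \sum_(Z in F) nhit R 1 X Z <= #|X|.
Proof.
move=> FP Flight F2L.
have : \sum_(Z in F) 4 * L * nhit R 1 X Z <= \sum_(Z in F) #|X| * #|Z|.
  exact: leq_sum Flight.
rewrite -!big_distrr /= -card_cover_sub //; nia.
Qed.

Lemma one_step_pure_pair : (2 + 4 * k) * L <= #|T| ->
  exists A B : {set T},
    [/\ [disjoint A & B], L <= 2 * #|A|, L <= #|B| & pure_pair e A B].
Proof.
move=> n_large.
have [t [F Fsub /andP[LF F2L]]] := exists_light_window n_large.
have FP : F \subset P.
  by apply: subset_trans Fsub _; apply/subsetP => Z; rewrite inE => /andP[].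
have F_light_typed Z : Z \in F -> light Z && (edge_type X Z == t).
  by move/(subsetP Fsub); rewrite inE => /andP[].
pose A := [set x in X | nparts F R 1 x == 0].
have A_far a b :
    a \in A -> b \in cover F -> [/\ a != b, [set a; b] \notin R & e a b = t].
  rewrite inE => /andP[aX /eqP a0] bF; have [ab abR] := nparts1_eq0_unresolved a0 bF.
  case/bigcupP: bF => Z ZF bZ; have /andP[_ /eqP <-] := F_light_typed Z ZF.
  by split; rewrite // (edge_typeE XQ (subsetP FP Z ZF) aX bZ ab abR).
exists A, (cover F); split => //.
- apply/pred0P => a /=; apply/negP => /andP[aA aF].
  by case: (A_far a a aA aF); rewrite eqxx.
- have := card_le_zeros_add_sum (nparts F R 1) X; rewrite -/A -sum_nhit.
  have := light_few_hits FP (fun Z ZF => proj1 (andP (F_light_typed Z ZF))) F2L; lia.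
- case: t Fsub F_light_typed A_far => _ _ A_far; [left|right] => a b aA bF;
    by case: (A_far a b aA bF) => _ _ ->.
Qed.

End OneMergeStep.

Section MergeSequence.
Variables (T : finType) (e : rel T) (s : seq (step T)).
Hypothesis ms : merge_seq e s.

Local Notation part i := (nth (dstep T) s i).1.
Local Notation resolved i := (nth (dstep T) s i).2.

Lemma nparts_le_width r j v :
  j.+1 < size s -> nparts (part j) (resolved j.+1) r v <= width r s.
Proof.
move=> js; have js' : j < (size s).-1 by rewrite -ltnS prednK // (leq_trans _ js).
by apply: leq_trans (leq_bigmax (Ordinal js')) => /=; apply: leq_bigmax.
Qed.

Lemma width_gt0 r : 1 < #|T| -> 0 < width r s.
Proof.
move=> T2; have [s_gt0 part0 partm partition_s _] := ms.
have [v _] : exists v : T, v \in [set: T] by apply/set0Pn; rewrite -card_gt0 cardsT ltnW.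
have s2 : 1 < size s.
  rewrite ltnNge; apply/negP => s1.
  have : [set: T] \in singletons T.
    by rewrite -part0 (_ : 0 = (size s).-1) ?partm ?inE //; lia.
  by case/imsetP => x _ Tx; move: T2; rewrite -cardsT Tx cards1.
apply: leq_trans (nparts_le_width r v s2).
have [partP _ _] := partition_s 0 s_gt0.
by apply: nparts_gt0; rewrite (cover_partition partP) inE.
Qed.

Lemma exists_first_large_step L : 1 < L <= #|T| ->
  exists j, [/\ j.+1 < size s, forall Z, Z \in part j -> #|Z| < L &
                exists2 X, X \in part j.+1 & L <= #|X|].
Proof.
case/andP=> L2 LT; have [s_gt0 part0 partm _ _] := ms.
pose large i := (i < size s) && [exists X in part i, L <= #|X|].
have large_last : large (size s).-1.
  rewrite /large partm prednK ?leqnn //=; apply/existsP; exists [set: T].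
  by rewrite inE eqxx cardsT.
case: (ex_minnP (ex_intro large _ large_last)) => [[|j]].
  by case/andP=> _ /existsP[X]; rewrite part0 => /andP[/imsetP[x _ ->]]; rewrite cards1; lia.
case/andP=> js /existsP[X /andP[XP LX]] jmin; exists j; split => //; last by exists X.
move=> Z ZP; rewrite ltnNge; apply/negP => LZ.
have : large j by rewrite /large (ltnW js); apply/existsP; exists Z; rewrite ZP.
by move/jmin; rewrite ltnn.
Qed.

Lemma merge_seq_pure_pair : 1 < #|T| ->
  exists A B : {set T},
    [/\ [disjoint A & B], #|T| <= 32 * width 1 s * #|A|,
        #|T| <= 32 * width 1 s * #|B| & pure_pair e A B].
Proof.
move=> T2; have k_gt0 := width_gt0 1 T2; set k := width 1 s in k_gt0 *.
case: (ltnP #|T| (16 * k)) => [n_small|n_large].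
  have [a [b [_ _ ab]]] := card_gt1P T2.
  exists [set a], [set b]; rewrite !cards1 disjoints1 inE ab; split; try lia.
  by case ab_edge: (e a b); [left|right] => x y /set1P-> /set1P->; rewrite ab_edge.
set L := #|T| %/ (8 * k).
have [L2 L_large n_le] : [/\ 1 < L, (2 + 4 * k) * L <= #|T| & #|T| <= 16 * k * L].
  case: (@divn_window #|T| (8 * k)); rewrite -/L; [lia | lia | move=> L2 L_lo L_hi].
  by split; nia.
clearbody L.
have L_range : 1 < L <= #|T|.
  by rewrite L2 /=; apply: leq_trans L_large; rewrite leq_pmull.
have [j [js small [X XP LX]]] := exists_first_large_step L_range.
have [_ _ _ partition_s coarse_s] := ms.
have [partP _ _] := partition_s j (ltnW js).
have [_ _ homQ] := partition_s j.+1 js.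
have [coarseQP _] := coarse_s j js.
have [A [B [AB LA LB pure]]] := one_step_pure_pair partP coarseQP homQ
  (fun v => nparts_le_width 1 v js) (fun Z ZP => ltnW (small Z ZP)) XP LX (ltnW L2) L_large.
by exists A, B; split => //; nia.
Qed.

End MergeSequence.

Local Open Scope ring_scope.

Lemma ratio_bound (R : numFieldType) (c k n a : nat) :
  (0 < c)%N -> (0 < k)%N -> (n <= c * k * a)%N ->
  (c%:R^-1 : R) * n%:R / k%:R ^+ 2 <= a%:R.
Proof.
move=> c_gt0 k_gt0 n_le.
rewrite ler_pdivrMr ?exprn_gt0 ?ltr0n // mulrC ler_pdivrMr ?ltr0n //.
rewrite -natrX -!natrM ler_nat (leq_trans n_le) //.
by rewrite expnS expn1 [X in (_ <= X)%N]mulnC !mulnA mulnAC leq_pmulr.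
Qed.

Theorem theorem1p1 :
  exists2 c : rat, 0 < c &
  forall (T : finType) (e : rel T), symmetric e -> irreflexive e ->
  (2 <= #|T|)%N ->
  forall k : nat, is_mw e 1 k ->
  exists A B : {set T},
    [/\ [disjoint A & B],
        c * (#|T|%:R) / (k%:R ^+ 2) <= (#|A|%:R : rat),
        c * (#|T|%:R) / (k%:R ^+ 2) <= (#|B|%:R : rat) &
        (forall a b, a \in A -> b \in B -> e a b) \/
        (forall a b, a \in A -> b \in B -> ~~ e a b)].
Proof.
exists (32%:R)^-1; first by rewrite invr_gt0 ltr0n.
move=> T e _ _ T2 k [[s ms <-] _].
have k_gt0 := width_gt0 ms 1 T2.
have [A [B [AB nA nB pure]]] := merge_seq_pure_pair ms T2.
by exists A, B; split;
  [| exact: ratio_bound _ _ k_gt0 nA | exact: ratio_bound _ _ k_gt0 nB |].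
Qed.
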